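(* Let $p>0$, $d>0$, $\chi>0$ and $\delta>0$ be real parameters, and for $\lambda>0$ define $$c(\lambda)=\lambda+\frac{p}{\lambda}-\frac{2\chi}{\pi}\arctan\!\left(\frac{1}{\delta}\min\!\left(\lambda,\frac{1}{\sqrt{d}}\right)\right).$$ Set $$\Lambda=\left\{\frac{p-\delta^2+\frac{2\chi}{\pi}\delta+\sqrt{\left(p-\delta^2+\frac{2\chi}{\pi}\delta\right)^2+4\delta^2p}}{2}\right\}^{1/2}.$$ Then $$\min_{\lambda>0} c(\lambda)=\begin{cases} 2\sqrt{p}-\frac{2\chi}{\pi}\arctan\!\left(\frac{1}{\sqrt{d}\,\delta}\right), & \text{if } dp>1,\\[4pt] \frac{1}{\sqrt{d}}+p\sqrt{d}-\frac{2\chi}{\pi}\arctan\!\left(\frac{1}{\sqrt{d}\,\delta}\right), & \text{if } 1-\frac{2\chi}{\pi\left(\delta+\frac{1}{d\delta}\right)}<dp<1,\\[4pt] \Lambda+\frac{p}{\Lambda}-\frac{2\chi}{\pi}\arctan\!\left(\frac{\Lambda}{\delta}\right), & \text{if } dp\le 1-\frac{2\chi}{\pi\left(\delta+\frac{1}{d\delta}\right)}. \end{cases}$$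
   Context: The function $c(\lambda)$ is the dispersion relation between the propagation speed $c$ and the exponential decay rate $\lambda$ of the front (density $\propto e^{-\lambda(x-ct)}$ far ahead) for the one-dimensional flux-limited Keller–Segel equation $\partial_t\rho+\partial_x(U_\delta[\partial_x\log S]\rho)=\partial_{xx}\rho+P(\rho)\rho$, $-d\partial_{xx}S+S=\rho$, with growth rate $P(\rho)=p$ for $0\le\rho\le 1/(1+p)$, and with chemotactic flux function $U_\delta(X)=\frac{2\chi}{\pi}\arctan(X/\delta)$. Here $p$ is the proliferation rate at low density, $d$ the diffusion coefficient of the chemoattractant, $\chi$ the modulation amplitude and $\delta^{-1}$ the stiffness of the chemotactic response. *)

From Stdlib Require Import Reals.
Open Scope R_scope.

Definition cdisp (p d chi delta lam : R) : R :=
  lam + p / lam - 2 * chi / PI * atan (/ delta * Rmin lam (/ sqrt d)).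

Definition LambdaC (p chi delta : R) : R :=
  let A := p - delta ^ 2 + 2 * chi / PI * delta in
  sqrt ((A + sqrt (A ^ 2 + 4 * delta ^ 2 * p)) / 2).

Definition is_min_pos (f : R -> R) (m : R) : Prop :=
  (exists lam, 0 < lam /\ f lam = m) /\ (forall lam, 0 < lam -> m <= f lam).

From Stdlib Require Import Reals Lra.
From Coquelicot Require Import Coquelicot.
Open Scope R_scope.

(* Write s := 1/sqrt d and k := 2 chi/PI. Above the cap s, c(lam) = lam + p/lam - k atan(s/delta),
   which decreases up to sqrt p and increases afterwards.  Below the cap, c is the uncapped
   relation lam + p/lam - k atan(lam/delta), whose derivative has the sign of
   lam^4 - A lam^2 - delta^2 p with A = p - delta^2 + k delta; so it decreases up to Lambda, the
   square root of the positive root of this quadratic in lam^2, and increases afterwards.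
   As sqrt p <= Lambda, the minimiser is sqrt p if s < sqrt p, s if sqrt p <= s <= Lambda, and
   Lambda if Lambda <= s.  In terms of d p these comparisons are dp > 1, dp < 1, and the sign of
   the quadratic at lam^2 = 1/d, which is the sign of the threshold minus d p. *)

Lemma atan_le x y : x <= y -> atan x <= atan y.
Proof. intros [Hlt | ->]; [left; apply atan_increasing |]; lra. Qed.

Lemma le_of_is_derive_nonneg (f df : R -> R) a b : a <= b ->
  (forall x, a <= x <= b -> is_derive f x (df x)) ->
  (forall x, a <= x <= b -> 0 <= df x) -> f a <= f b.
Proof.
  intros Hab Hder Hpos.
  destruct (MVT_gen f a b df) as (c & Hc & Hmvt);
    rewrite Rmin_left, Rmax_right in * by lra.
  - intros x Hx. apply Hder. lra.
  - intros x Hx. apply continuity_pt_filterlim, (ex_derive_continuous (V := R_NormedModule)).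
    exists (df x). now apply Hder.
  - pose proof (Hpos c Hc). nra.
Qed.

Lemma le_of_is_derive_nonpos (f df : R -> R) a b : a <= b ->
  (forall x, a <= x <= b -> is_derive f x (df x)) ->
  (forall x, a <= x <= b -> df x <= 0) -> f b <= f a.
Proof.
  intros Hab Hder Hneg.
  enough (- f a <= - f b) by lra.
  apply (le_of_is_derive_nonneg (fun x => - f x) (fun x => - df x)); auto.
  - intros x Hx. exact (is_derive_opp f x (df x) (Hder x Hx)).
  - intros x Hx. specialize (Hneg x Hx). lra.
Qed.

Definition pos_root (A q : R) : R := (A + sqrt (A ^ 2 + 4 * q)) / 2.

Lemma quad_factor_pos_root A q mu : 0 < q -> 0 <= mu ->
  exists c, 0 < c /\ mu ^ 2 - A * mu - q = c * (mu - pos_root A q).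
Proof.
  intros Hq Hmu.
  set (D := sqrt (A ^ 2 + 4 * q)).
  assert (HD2 : D * D = A ^ 2 + 4 * q) by (apply sqrt_sqrt; nra).
  assert (HD : 0 <= D) by apply sqrt_pos.
  exists (mu - (A - D) / 2). unfold pos_root; fold D. split; nra.
Qed.

Lemma quad_nonpos_iff A q mu : 0 < q -> 0 <= mu ->
  mu ^ 2 - A * mu - q <= 0 <-> mu <= pos_root A q.
Proof.
  intros Hq Hmu. destruct (quad_factor_pos_root A q mu Hq Hmu) as (c & Hc & ->).
  split; intros H; nra.
Qed.

Lemma quad_nonneg_iff A q mu : 0 < q -> 0 <= mu ->
  0 <= mu ^ 2 - A * mu - q <-> pos_root A q <= mu.
Proof.
  intros Hq Hmu. destruct (quad_factor_pos_root A q mu Hq Hmu) as (c & Hc & ->).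
  split; intros H; nra.
Qed.

Lemma two_sqrt_le_add_div p x : 0 <= p -> 0 < x -> 2 * sqrt p <= x + p / x.
Proof.
  intros Hp Hx. pose proof (sqrt_sqrt p Hp). pose proof (sqrt_pos p).
  assert (Hmul : (x + p / x) * x = x * x + p) by (field; lra).
  pose proof (pow2_ge_0 (x - sqrt p)).
  apply (Rmult_le_reg_r x); [lra |]. rewrite Hmul. nra.
Qed.

Lemma add_div_le_of_sqrt_le p s x : 0 < p -> sqrt p <= s <= x ->
  s + p / s <= x + p / x.
Proof.
  intros Hp Hs. pose proof (sqrt_sqrt p (Rlt_le _ _ Hp)). pose proof (sqrt_lt_R0 p Hp).
  assert (Hdiff : x + p / x - (s + p / s) = (x - s) * (x * s - p) / (x * s)) by (field; nra).
  enough (0 <= (x - s) * (x * s - p) / (x * s)) by lra.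
  assert (Hps : p <= x * s) by nra.
  apply Rdiv_le_0_compat; [apply Rmult_le_pos |]; nra.
Qed.

Section Dispersion.

Variables p k delta : R.
Hypotheses (Hp : 0 < p) (Hk : 0 < k) (Hdelta : 0 < delta).

Definition c_uncapped (x : R) : R := x + p / x - k * atan (/ delta * x).

Definition c_capped (s x : R) : R := x + p / x - k * atan (/ delta * Rmin x s).

Let A := p - delta ^ 2 + k * delta.

Let L2 := pos_root A (delta ^ 2 * p).

Definition lam_star : R := sqrt L2.

Lemma p_le_pos_root : p <= L2.
Proof.
  assert (Hq : 0 < delta ^ 2 * p) by (apply Rmult_lt_0_compat; nra).
  apply quad_nonpos_iff; [exact Hq | lra |].
  assert (0 < k * delta * p) by (repeat apply Rmult_lt_0_compat; lra).
  unfold A. nra.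
Qed.

Lemma sqrt_le_lam_star : sqrt p <= lam_star.
Proof. apply sqrt_le_1_alt, p_le_pos_root. Qed.

Lemma lam_star_sqr : lam_star ^ 2 = L2.
Proof. pose proof p_le_pos_root. unfold lam_star. rewrite pow2_sqrt; lra. Qed.

Let dc (x : R) : R := 1 - p / x ^ 2 - k * delta / (delta ^ 2 + x ^ 2).

Lemma is_derive_c_uncapped x : 0 < x -> is_derive c_uncapped x (dc x).
Proof.
  intros Hx.
  assert (Hatan : is_derive (fun y => atan (/ delta * y)) x (/ delta * / (1 + (/ delta * x)²))).
  { apply (is_derive_comp atan (fun y => / delta * y)); [apply is_derive_atan |].
    auto_derive; [easy | ring]. }
  assert (Hrat : is_derive (fun y => y + p / y) x (1 - p / x ^ 2)).
  { auto_derive; [lra | field; lra]. }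
  replace (dc x) with (1 - p / x ^ 2 - k * (/ delta * / (1 + (/ delta * x)²)))
    by (unfold dc, Rsqr; field; split; nra).
  exact (is_derive_minus _ _ _ _ _ Hrat (is_derive_scal _ _ k _ Hatan)).
Qed.

Lemma dc_mul_eq_quad x : 0 < x ->
  dc x * (x ^ 2 * (delta ^ 2 + x ^ 2)) = (x ^ 2) ^ 2 - A * x ^ 2 - delta ^ 2 * p.
Proof. intros Hx. unfold dc, A. field. split; nra. Qed.

Lemma c_uncapped_nonincreasing x y : 0 < x <= y -> y <= lam_star ->
  c_uncapped y <= c_uncapped x.
Proof.
  intros Hxy Hy.
  apply (le_of_is_derive_nonpos _ dc); [lra | intros t Ht; apply is_derive_c_uncapped; lra |].
  intros t Ht.
  assert (Hquad : (t ^ 2) ^ 2 - A * t ^ 2 - delta ^ 2 * p <= 0).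
  { apply quad_nonpos_iff; [apply Rmult_lt_0_compat; nra | nra |].
    fold L2. rewrite <- lam_star_sqr. nra. }
  rewrite <- dc_mul_eq_quad in Hquad by lra.
  assert (0 < t ^ 2 * (delta ^ 2 + t ^ 2)) by (apply Rmult_lt_0_compat; nra).
  nra.
Qed.

Lemma c_uncapped_nondecreasing x y : lam_star <= x <= y ->
  c_uncapped x <= c_uncapped y.
Proof.
  intros Hxy. pose proof sqrt_le_lam_star. pose proof (sqrt_lt_R0 p Hp).
  apply (le_of_is_derive_nonneg _ dc); [lra | intros t Ht; apply is_derive_c_uncapped; lra |].
  intros t Ht.
  assert (Hquad : 0 <= (t ^ 2) ^ 2 - A * t ^ 2 - delta ^ 2 * p).
  { apply quad_nonneg_iff; [apply Rmult_lt_0_compat; nra | nra |].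
    fold L2. rewrite <- lam_star_sqr. nra. }
  rewrite <- dc_mul_eq_quad in Hquad by lra.
  assert (0 < t ^ 2 * (delta ^ 2 + t ^ 2)) by (apply Rmult_lt_0_compat; nra).
  nra.
Qed.

Lemma c_capped_below_cap s x : x <= s -> c_capped s x = c_uncapped x.
Proof. intros Hx. unfold c_capped, c_uncapped. now rewrite Rmin_left. Qed.

Lemma c_capped_above_cap s x : s <= x ->
  c_capped s x = x + p / x - k * atan (/ delta * s).
Proof. intros Hx. unfold c_capped. now rewrite Rmin_right. Qed.

Lemma c_capped_ge s x : x + p / x - k * atan (/ delta * s) <= c_capped s x.
Proof.
  unfold c_capped.
  enough (atan (/ delta * Rmin x s) <= atan (/ delta * s)) by nra.
  apply atan_le, Rmult_le_compat_l; [left; apply Rinv_0_lt_compat, Hdelta | apply Rmin_r].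
Qed.

Lemma c_capped_min_below_sqrt s : s < sqrt p ->
  is_min_pos (c_capped s) (2 * sqrt p - k * atan (/ delta * s)).
Proof.
  intros Hs. pose proof (sqrt_sqrt p (Rlt_le _ _ Hp)). pose proof (sqrt_lt_R0 p Hp).
  split.
  - exists (sqrt p). split; [lra |].
    rewrite c_capped_above_cap by lra.
    replace (p / sqrt p) with (sqrt p) by (field_simplify_eq; lra). ring.
  - intros x Hx. pose proof (c_capped_ge s x).
    pose proof (two_sqrt_le_add_div p x (Rlt_le _ _ Hp) Hx). lra.
Qed.

Lemma c_capped_min_between s : sqrt p <= s <= lam_star ->
  is_min_pos (c_capped s) (c_uncapped s).
Proof.
  intros Hs. pose proof (sqrt_lt_R0 p Hp).
  split.
  - exists s. split; [lra |]. now apply c_capped_below_cap, Rle_refl.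
  - intros x Hx. destruct (Rle_or_lt x s) as [Hxs | Hsx].
    + rewrite c_capped_below_cap by lra. apply c_uncapped_nonincreasing; lra.
    + rewrite c_capped_above_cap by lra. unfold c_uncapped.
      pose proof (add_div_le_of_sqrt_le p s x Hp ltac:(lra)). lra.
Qed.

Lemma c_capped_min_above s : lam_star <= s ->
  is_min_pos (c_capped s) (c_uncapped lam_star).
Proof.
  intros Hs. pose proof sqrt_le_lam_star. pose proof (sqrt_lt_R0 p Hp).
  assert (Hmin : forall x, 0 < x -> x <= s -> c_uncapped lam_star <= c_uncapped x).
  { intros x Hx Hxs. destruct (Rle_or_lt x lam_star).
    - apply c_uncapped_nonincreasing; lra.
    - apply c_uncapped_nondecreasing; lra. }
  split.
  - exists lam_star. split; [lra |]. now apply c_capped_below_cap.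
  - intros x Hx. destruct (Rle_or_lt x s) as [Hxs | Hsx].
    + rewrite c_capped_below_cap by lra. now apply Hmin.
    + rewrite c_capped_above_cap by lra.
      pose proof (add_div_le_of_sqrt_le p s x Hp ltac:(lra)).
      pose proof (Hmin s ltac:(lra) (Rle_refl s)). unfold c_uncapped in *. lra.
Qed.

End Dispersion.

Lemma LambdaC_eq_lam_star p chi delta : LambdaC p chi delta = lam_star p (2 * chi / PI) delta.
Proof. unfold LambdaC, lam_star, pos_root. now rewrite Rmult_assoc. Qed.

Lemma quad_inv_eq_threshold_gap p k delta d : 0 < d -> 0 < delta ->
  (/ d) ^ 2 - (p - delta ^ 2 + k * delta) * / d - delta ^ 2 * p
  = (1 - k / (delta + / (d * delta)) - d * p) * (d * delta ^ 2 + 1) / d ^ 2.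
Proof. intros Hd Hdelta. field. repeat split; try lra; nra. Qed.

Lemma inv_sqrt_le_lam_star p k delta d : 0 < p -> 0 < delta -> 0 < d ->
  1 - k / (delta + / (d * delta)) < d * p -> / sqrt d <= lam_star p k delta.
Proof.
  intros Hp Hdelta Hd Hthr.
  rewrite <- sqrt_inv. apply sqrt_le_1_alt, quad_nonpos_iff;
    [apply Rmult_lt_0_compat; nra | left; now apply Rinv_0_lt_compat |].
  rewrite quad_inv_eq_threshold_gap by lra.
  assert (0 < (d * delta ^ 2 + 1) / d ^ 2) by (apply Rdiv_lt_0_compat; nra).
  unfold Rdiv in *. nra.
Qed.

Lemma lam_star_le_inv_sqrt p k delta d : 0 < p -> 0 < delta -> 0 < d ->
  d * p <= 1 - k / (delta + / (d * delta)) -> lam_star p k delta <= / sqrt d.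
Proof.
  intros Hp Hdelta Hd Hthr.
  rewrite <- sqrt_inv. apply sqrt_le_1_alt, quad_nonneg_iff;
    [apply Rmult_lt_0_compat; nra | left; now apply Rinv_0_lt_compat |].
  rewrite quad_inv_eq_threshold_gap by lra.
  assert (0 < (d * delta ^ 2 + 1) / d ^ 2) by (apply Rdiv_lt_0_compat; nra).
  unfold Rdiv in *. nra.
Qed.

Lemma inv_sqrt_lt_sqrt d p : 0 < d -> 1 < d * p -> / sqrt d < sqrt p.
Proof.
  intros Hd Hdp. rewrite <- sqrt_inv. apply sqrt_lt_1_alt.
  split; [left; now apply Rinv_0_lt_compat |].
  apply (Rmult_lt_reg_l d); [exact Hd |]. now rewrite Rinv_r by lra.
Qed.

Lemma sqrt_le_inv_sqrt d p : 0 < d -> d * p <= 1 -> sqrt p <= / sqrt d.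
Proof.
  intros Hd Hdp. rewrite <- sqrt_inv. apply sqrt_le_1_alt.
  apply (Rmult_le_reg_l d); [exact Hd |]. now rewrite Rinv_r by lra.
Qed.

Theorem mainTheorem1 (p d chi delta : R) :
  0 < p -> 0 < d -> 0 < chi -> 0 < delta ->
  let thr := 1 - 2 * chi / (PI * (delta + / (d * delta))) in
  (d * p > 1 ->
     is_min_pos (cdisp p d chi delta)
       (2 * sqrt p - 2 * chi / PI * atan (/ (sqrt d * delta)))) /\
  (thr < d * p < 1 ->
     is_min_pos (cdisp p d chi delta)
       (/ sqrt d + p * sqrt d - 2 * chi / PI * atan (/ (sqrt d * delta)))) /\
  (d * p <= thr ->
     is_min_pos (cdisp p d chi delta)
       (LambdaC p chi delta + p / LambdaC p chi delta
        - 2 * chi / PI * atan (LambdaC p chi delta / delta))).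
Proof.
  intros Hp Hd Hchi Hdelta thr.
  pose proof PI_RGT_0.
  pose proof (sqrt_lt_R0 d Hd).
  assert (Hk : 0 < 2 * chi / PI) by (apply Rdiv_lt_0_compat; lra).
  assert (Hthr : thr = 1 - 2 * chi / PI / (delta + / (d * delta))) by (unfold thr; field; nra).
  assert (Hcap : / (sqrt d * delta) = / delta * / sqrt d) by (field; lra).
  change (cdisp p d chi delta) with (c_capped p (2 * chi / PI) delta (/ sqrt d)).
  rewrite Hthr, Hcap, LambdaC_eq_lam_star.
  split; [| split].
  - intros Hdp. apply c_capped_min_below_sqrt; try lra. now apply inv_sqrt_lt_sqrt.
  - intros [Hlo Hhi].
    replace (p * sqrt d) with (p / / sqrt d) by (field; lra).
    apply c_capped_min_between; try lra.
    split; [apply sqrt_le_inv_sqrt | apply inv_sqrt_le_lam_star]; lra.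
  - intros Hdp.
    replace (lam_star p (2 * chi / PI) delta / delta)
      with (/ delta * lam_star p (2 * chi / PI) delta) by (unfold Rdiv; ring).
    apply c_capped_min_above; try lra. apply lam_star_le_inv_sqrt; lra.
Qed.
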